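(* Consider the group-weighted network variant described in the context, with two networks $(s_{N_k})_{k=1}^G$ and $(s'_{N_k})_{k=1}^G$ and all other parameters identical. Suppose $s'_{N_k}=z\,s_{N_k}$ for all $k$, where $1\le z\le 1/\max_k s_{N_k}$. Let $D_n^t$ and $D_n'^t$ be the corresponding sets of new-product consumers. Then $D_n^t\subseteq D_n'^t$ for all $t\ge1$.
   Context: Group-weighted network variant. There are $N$ individuals partitioned into $G\ge2$ nonempty groups $N_1,\dots,N_G$ (also denoting cardinalities). Members of $N_k$ have aspiration level $H_{N_k}$, with $H_{N_1}>\cdots>H_{N_G}$; write $H_i$ for individual $i$'s level. The incumbent $p_c$ gives payoff $v_L$ to everyone, where $H_{N_2}<v_L<H_{N_1}$. The new product $p_n$ gives individual $i$ the payoff $v_{Hi}\ge H_{N_1}$. Product similarities are $s_{p_c,p_c}=s_{p_n,p_n}=1$, $s_{p_n,p_c}=s_p\in(0,1)$ and $s_{p_c,p_n}=0$. A social network is a vector $(s_{N_k})_{k=1}^G$ with $s_{N_k}\in[0,1]$ and $\max_k s_{N_k}>0$. Individual similarities are $s_{i,i}=1$ and $s_{i,j}=s_{N_k}$ whenever $j\in N_k$ and $j\neq i$. Dynamics. In period $0$ everyone consumes $p_c$ ($D_c^0=\{1,\dots,N\}$, $D_n^0=\emptyset$). For $t\ge1$, $U_i^t(p_c)=\sum_{t'=0}^{t-1}\sum_{j\in D_c^{t'}}s_{i,j}(v_L-H_i)$ and $U_i^t(p_n)=s_pU_i^t(p_c)+\sum_{t'=0}^{t-1}\sum_{j\in D_n^{t'}}s_{i,j}(v_{Hj}-H_i)$.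 Individual $i\in D_n^t$ iff $U_i^t(p_n)>U_i^t(p_c)$; otherwise $i\in D_c^t$. *)

From mathcomp Require Import all_boot all_order all_algebra.
Set Implicit Arguments. Unset Strict Implicit. Unset Printing Implicit Defensive.
Import Order.TTheory GRing.Theory Num.Theory.
Local Open Scope ring_scope.

(* Individuals are 'I_N, groups are 'I_G (group N_1 is index 0, N_2 index 1, ...).
   grp i is the group of individual i; H k is the aspiration level of group k;
   vH i is the payoff of the new product to individual i; s k is s_{N_k}. *)

Section Dyn.
Variables (R : realFieldType) (N G : nat) (grp : 'I_N -> 'I_G)
  (H : 'I_G -> R) (vL sp : R) (vH : 'I_N -> R) (s : 'I_G -> R).

Definition isim (i j : 'I_N) : R := if i == j then 1 else s (grp j).

(* past : the history [:: D_n^0; ...; D_n^(t-1)]; D_c^t' is the complement. *)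
Definition Uc (past : seq {set 'I_N}) (i : 'I_N) : R :=
  \sum_(D <- past) \sum_(j | j \notin D) isim i j * (vL - H (grp i)).

Definition Un (past : seq {set 'I_N}) (i : 'I_N) : R :=
  sp * Uc past i + \sum_(D <- past) \sum_(j in D) isim i j * (vH j - H (grp i)).

Definition step (past : seq {set 'I_N}) : {set 'I_N} :=
  [set i | Uc past i < Un past i].

Fixpoint hist (t : nat) : seq {set 'I_N} :=
  match t with
  | 0 => [::]
  | t'.+1 => rcons (hist t') (if t' is 0 then set0 else step (hist t'))
  end.

(* D_n^t : period 0 everybody consumes p_c *)
Definition Dn (t : nat) : {set 'I_N} := if t is 0 then set0 else step (hist t).

End Dyn.

(* max_k s_{N_k} (for nonnegative s) *)
Definition smax (R : realFieldType) (G : nat) (s : 'I_G -> R) : R :=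
  \big[Num.max/0]_(k < G) s k.

(* U_i^t(p_n) - U_i^t(p_c) is a sum over past periods of a period gain, which
   splits into i's own term and a peer term linear in the network.  Members of
   the top group always adopt.  For anyone else every gain term is nondecreasing
   in the set of adopters, so adopter sets grow over time; and once i adopts,
   its accumulated peer gain is positive, because its own term is nonpositive
   until it first adopts.  Scaling the network by z >= 1 multiplies that positive
   peer gain by z and leaves the own term alone, and by induction on t the larger
   adopter sets of the scaled network can only increase the gains further. *)

From mathcomp Require Import all_boot all_order all_algebra.
From mathcomp Require Import lra.
Import Order.TTheory GRing.Theory Num.Theory.
Local Open Scope ring_scope.
Set Implicit Arguments. Unset Strict Implicit.

Lemma sum_gt0_last (R : realDomainType) (n : nat) (f : nat -> R) :
  (forall u, (u < n)%N -> f u <= f n) -> 0 < \sum_(u < n) f u -> 0 < f n.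
Proof.
move=> f_le; apply: contraTT; rewrite -!leNgt => fn_le0.
by apply: sumr_le0 => u _; apply: le_trans (f_le u (ltn_ord u)) fn_le0.
Qed.

Section Dynamics.
Variables (R : realFieldType) (N G : nat) (grp : 'I_N -> 'I_G)
  (H : 'I_G -> R) (vL sp : R) (vH : 'I_N -> R).

Local Notation D s := (Dn grp H vL sp vH s).

(* What j's choice in one past period adds to U_i(p_n) - U_i(p_c), per unit of
   similarity s_{i,j}: j in D_n contributes v_{Hj} - H_i, j in D_c contributes
   (s_p - 1)(v_L - H_i). *)
Definition pair_gain (i j : 'I_N) (A : {set 'I_N}) : R :=
  if j \in A then vH j - H (grp i) else (sp - 1) * (vL - H (grp i)).

Definition period_gain (s : 'I_G -> R) (A : {set 'I_N}) (i : 'I_N) : R :=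
  \sum_j isim grp s i j * pair_gain i j A.

Definition peer_gain (s : 'I_G -> R) (A : {set 'I_N}) (i : 'I_N) : R :=
  \sum_(j | j != i) isim grp s i j * pair_gain i j A.

Lemma period_gainE s A i : period_gain s A i = pair_gain i i A + peer_gain s A i.
Proof. by rewrite /period_gain (bigD1 i) //= /isim eqxx mul1r. Qed.

Lemma sum_hist s (F : {set 'I_N} -> R) t :
  \sum_(A <- hist grp H vL sp vH s t) F A = \sum_(u < t) F (D s u).
Proof.
elim: t => [|t IH]; first by rewrite big_nil big_ord0.
by rewrite /= -cats1 big_cat /= big_seq1 IH big_ord_recr; case: t {IH}.
Qed.

Lemma Un_sub_Uc s past i :
  Un grp H vL sp vH s past i - Uc grp H vL s past i =
  \sum_(A <- past) period_gain s A i.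
Proof.
rewrite /Un addrAC -{2}(mul1r (Uc _ _ _ _ _ _)) -mulrBl /Uc big_distrr -big_split.
apply: eq_bigr => A _; rewrite /period_gain [RHS](bigID (mem A)) /= addrC big_distrr.
congr (_ + _); apply: eq_bigr => j jA; rewrite /pair_gain ?(negbTE jA) ?jA //.
by rewrite mulrCA.
Qed.

Lemma mem_Dn s t i :
  (i \in D s t) = (0 < t)%N && (0 < \sum_(u < t) period_gain s (D s u) i).
Proof.
case: t => [|t]; first by rewrite inE.
by rewrite [D s t.+1]/Dn /step inE -subr_gt0 Un_sub_Uc sum_hist.
Qed.

Hypothesis sp_lt1 : sp < 1.
Hypothesis H_le_vH : forall i j, H (grp i) <= vH j.
Hypothesis vL_neqH : forall i, vL < H (grp i) \/ H (grp i) < vL.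

Lemma nonadopter_gain_le0 i : H (grp i) < vL -> (sp - 1) * (vL - H (grp i)) <= 0.
Proof. by move=> Hi; apply: mulr_le0_ge0; rewrite ?subr_le0 ?subr_ge0 ltW. Qed.

Section Monotone.
Variable s : 'I_G -> R.
Hypothesis s_ge0 : forall k, 0 <= s k.

Lemma isim_ge0 i j : 0 <= isim grp s i j.
Proof. by rewrite /isim; case: eqP. Qed.

Lemma pair_gain_ge0 i j A : vL < H (grp i) -> 0 <= pair_gain i j A.
Proof.
move=> Hi; rewrite /pair_gain; case: ifP => _; first by rewrite subr_ge0.
by apply: mulr_le0; rewrite subr_le0 ltW.
Qed.

Lemma mem_Dn_top i t : vL < H (grp i) -> (0 < t)%N -> i \in D s t.
Proof.
move=> Hi; rewrite mem_Dn; case: t => [|t] //= _.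
rewrite big_ord_recl /=; apply: ltr_wpDr.
  apply: sumr_ge0 => u _; apply: sumr_ge0 => j _.
  by apply: mulr_ge0; [exact: isim_ge0 | exact: pair_gain_ge0].
rewrite period_gainE /pair_gain inE; apply: ltr_wpDr.
  by apply: sumr_ge0 => j _; apply: mulr_ge0; [exact: isim_ge0 | exact: pair_gain_ge0].
by rewrite -mulrNN !opprB mulr_gt0 ?subr_gt0.
Qed.

Lemma sum_pair_gain_mono (P : pred 'I_N) i (A B : {set 'I_N}) :
  H (grp i) < vL -> A \subset B ->
  \sum_(j | P j) isim grp s i j * pair_gain i j A <=
  \sum_(j | P j) isim grp s i j * pair_gain i j B.
Proof.
move=> Hi AB; apply: ler_sum => j _; apply: ler_wpM2l; first exact: isim_ge0.
rewrite /pair_gain; case: (boolP (j \in A)) => jA; first by rewrite (subsetP AB j jA).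
have out_le0 := nonadopter_gain_le0 Hi.
by case: ifP => _; rewrite // (le_trans out_le0) ?subr_ge0.
Qed.

Lemma period_gain_mono i (A B : {set 'I_N}) :
  H (grp i) < vL -> A \subset B -> period_gain s A i <= period_gain s B i.
Proof. exact: sum_pair_gain_mono. Qed.

Lemma peer_gain_mono i (A B : {set 'I_N}) :
  H (grp i) < vL -> A \subset B -> peer_gain s A i <= peer_gain s B i.
Proof. exact: sum_pair_gain_mono. Qed.

Lemma Dn_subS t : (forall u, (u <= t)%N -> D s u \subset D s t) ->
  D s t \subset D s t.+1.
Proof.
move=> Dle; apply/subsetP => i; case: (vL_neqH i) => Hi.
  by rewrite mem_Dn => /andP[t_gt0 _]; apply: mem_Dn_top => //; apply: ltnW.
rewrite !mem_Dn => /andP[t_gt0 gain_gt0] /=; rewrite big_ord_recr /=.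
apply: addr_gt0 => //.
apply: (sum_gt0_last (f := fun u => period_gain s (D s u) i)) gain_gt0 => u ut.
exact/period_gain_mono/Dle/ltnW.
Qed.

Lemma Dn_mono t u : (u <= t)%N -> D s u \subset D s t.
Proof.
elim: t u => [|t IH] u; first by rewrite leqn0 => /eqP ->.
rewrite leq_eqVlt => /orP[/eqP -> //|ut].
exact: subset_trans (IH u ut) (Dn_subS IH).
Qed.

Lemma peer_gain_sum_gt0 i t : H (grp i) < vL -> i \in D s t ->
  0 < \sum_(u < t) peer_gain s (D s u) i.
Proof.
move=> Hi; elim: t => [|t IH] it; first by rewrite inE in it.
rewrite big_ord_recr /=; case: (boolP (i \in D s t)) => [it'|nit].
  have peer_gt0 := IH it'; apply: addr_gt0 => //.
  apply: (sum_gt0_last (f := fun u => peer_gain s (D s u) i)) peer_gt0 => u ut.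
  exact/peer_gain_mono/Dn_mono/ltnW.
have own_le0 : \sum_(u < t.+1) pair_gain i i (D s u) <= 0.
  apply: sumr_le0 => u _; rewrite /pair_gain ifF; first exact: nonadopter_gain_le0.
  by apply: contraNF nit; apply/subsetP/Dn_mono; rewrite -ltnS.
move: it; rewrite mem_Dn => /andP[_]; rewrite big_ord_recr /=.
under eq_bigr do rewrite period_gainE; rewrite period_gainE big_split /=.
by rewrite big_ord_recr /= in own_le0; lra.
Qed.

End Monotone.

Variables (s s' : 'I_G -> R) (z : R).
Hypothesis s_ge0 : forall k, 0 <= s k.
Hypothesis s'E : forall k, s' k = z * s k.
Hypothesis z_ge1 : 1 <= z.

Lemma peer_gain_scale A i : peer_gain s' A i = z * peer_gain s A i.
Proof.
rewrite /peer_gain big_distrr; apply: eq_bigr => j ji.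
by rewrite /isim eq_sym (negbTE ji) s'E -mulrA.
Qed.

Lemma Dn_scale_subset t : D s t \subset D s' t.
Proof.
have s'_ge0 k : 0 <= s' k by rewrite s'E mulr_ge0 // (le_trans ler01 z_ge1).
elim/ltn_ind: t => t IH; apply/subsetP => i it.
case: (vL_neqH i) => Hi.
  by apply: mem_Dn_top => //; move: it; rewrite mem_Dn => /andP[].
have peer_gt0 := peer_gain_sum_gt0 s_ge0 Hi it.
move: it; rewrite !mem_Dn => /andP[-> gain_gt0] /=.
apply: lt_le_trans (_ : \sum_(u < t) period_gain s' (D s u) i <= _); last first.
  by apply: ler_sum => u _; apply/period_gain_mono/IH.
move: gain_gt0; under eq_bigr do rewrite period_gainE.
under [X in _ -> 0 < X]eq_bigr do rewrite period_gainE peer_gain_scale.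
rewrite !big_split /= -big_distrr /= => /lt_le_trans; apply.
by rewrite lerD2l ler_peMl // ltW.
Qed.

End Dynamics.

Lemma le_strictly_decreasing (R : realFieldType) (G : nat) (H : 'I_G -> R)
    (k l : 'I_G) :
  (forall k l : 'I_G, (k < l)%N -> H l < H k) -> (k <= l)%N -> H l <= H k.
Proof.
move=> H_decr; rewrite leq_eqVlt => /orP[/eqP kl|kl]; last exact/ltW/H_decr.
by rewrite (_ : l = k) //; apply: val_inj.
Qed.

Unset Implicit Arguments.

Theorem proposition5 (R : realFieldType) (N G : nat) (grp : 'I_N -> 'I_G)
  (H : 'I_G -> R) (vL sp : R) (vH : 'I_N -> R) (s s' : 'I_G -> R) (z : R) :
  (2 <= G)%N ->
  (forall k : 'I_G, exists i : 'I_N, grp i = k) ->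
  (forall k l : 'I_G, (k < l)%N -> H l < H k) ->
  (forall k : 'I_G, nat_of_ord k = 1%N -> H k < vL) ->
  (forall k : 'I_G, nat_of_ord k = 0%N -> vL < H k) ->
  (forall (i : 'I_N) (k : 'I_G), nat_of_ord k = 0%N -> H k <= vH i) ->
  0 < sp < 1 ->
  (forall k, 0 <= s k <= 1) ->
  0 < smax s ->
  (forall k, s' k = z * s k) ->
  1 <= z <= 1 / smax s ->
  forall t : nat, (1 <= t)%N ->
    Dn grp H vL sp vH s t \subset Dn grp H vL sp vH s' t.
Proof.
(* The upper bound on z and the nonemptiness of the groups only make s' a
   network of the model; the argument needs z >= 1 alone. *)
move=> G_ge2 _ H_decr H1_lt H0_gt H0_le /andP[_ sp_lt1] s01 _ s'E /andP[z_ge1 _] t _.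
pose k0 : 'I_G := Ordinal (ltnW G_ge2).
pose k1 : 'I_G := Ordinal G_ge2.
have H_le_vH i j : H (grp i) <= vH j.
  exact: le_trans (le_strictly_decreasing (k := k0) H_decr (leq0n _)) (H0_le j k0 erefl).
have vL_neqH i : vL < H (grp i) \/ H (grp i) < vL.
  have [gi0|gi_gt0] := posnP (grp i); first by left; apply: H0_gt.
  by right; apply: le_lt_trans (H1_lt k1 erefl); exact: le_strictly_decreasing.
have s_ge0 k : 0 <= s k by case/andP: (s01 k).
exact: Dn_scale_subset sp_lt1 H_le_vH vL_neqH _ _ _ s_ge0 s'E z_ge1 t.
Qed.
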